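(* Let $p\ne 2,5$ be a prime and let $\sum_{i=0}^\infty a_it^i\in\mathbb{C}_p[[t]]$ be a power series with integral coefficients ($v(a_i)\ge 0$ for all $i$). Let $f(t)=\sum_{i=0}^\infty\frac{a_i}{i+1}t^{i+1}$. If $v(a_0)=0$, then $\mathrm{New}_1(f)=\emptyset$ and $\mathrm{New}_{1/2}(f)\subset[1,3]$. If $v(a_1)=0$ or $v(a_2)=0$, then $\mathrm{New}_1(f)\subset[1,3]$ and $\mathrm{New}_{1/2}(f)\subset[1,3]$.
   Context: $\mathbb{C}_p$ is the completion of $\overline{\mathbb{Q}_p}$ with valuation $v$, $v(p)=1$, $v(0)=\infty$. For a positive rational $m$ and a power series $F(t)=\sum_{u\ge0}c_ut^u$, the Newton polygon $\mathrm{New}_m(F)\subset\mathbb{R}$ is the convex hull of the set of $u\in\mathbb{Z}_{\ge0}$ for which there exists $w\in\mathbb{Q}$ with $w\ge m$ such that $v(c_u)+wu=v(c_{u'})+wu'$ for some $u'\ne u$ and $v(c_u)+wu\le v(c_{u''})+wu''$ for all $u''\in\mathbb{Z}_{\ge0}$. *)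

From Stdlib Require Import Reals.
From mathcomp Require Import all_boot all_order all_algebra.
Set Implicit Arguments. Unset Strict Implicit. Unset Printing Implicit Defensive.
Import Order.TTheory GRing.Theory Num.Theory.
Local Open Scope ring_scope.

(* Extended rationals Q ∪ {+oo}: [None] stands for +oo = v(0). *)
Definition ole (a b : option rat) : bool :=
  match a, b with
  | _, None => true
  | None, Some _ => false
  | Some x, Some y => (x <= y)%R
  end.

Definition oadd (a b : option rat) : option rat :=
  match a, b with
  | Some x, Some y => Some (x + y)%R
  | _, _ => None
  end.

Definition shift (a : option rat) (w : rat) (u : nat) : option rat :=
  oadd a (Some (w * u%:R)%R).

(* v : K -> Q ∪ {+oo} is a (rank one, Q-valued) valuation normalized by
   v(p) = 1, i.e. it has the properties of the valuation of C_p used in the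
   paper: v(0) = +oo (and only 0), v(xy) = v(x) + v(y),
   v(x + y) >= min(v(x), v(y)), v(p) = 1. *)
Definition p_valuation (K : fieldType) (p : nat) (v : K -> option rat) : Prop :=
  [/\ forall x, v x = None <-> x = 0,
      forall x y, v (x * y) = oadd (v x) (v y),
      forall x y, ole (v x) (v (x + y)) || ole (v y) (v (x + y))
    & v (p%:R) = Some 1].

(* u belongs to the generating set of New_m(F), F = sum_u c_u t^u:
   there is a rational w >= m such that u realizes the minimum of
   v(c_u'') + w u'' over all u'', and this minimum is also attained at
   some u' <> u. *)
Definition in_New (K : fieldType) (v : K -> option rat) (m : rat)
    (c : nat -> K) (u : nat) : Prop :=
  exists w : rat, (m <= w)%R /\
    (exists u', u' <> u /\ shift (v (c u)) w u = shift (v (c u')) w u') /\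
    (forall u'', ole (shift (v (c u)) w u) (shift (v (c u'')) w u'')).

(* New_m(F) ⊂ R: the convex hull in R of that set of nonnegative integers
   (for a subset of R, the convex hull is the union of the segments
   joining two of its points). *)
Definition New (K : fieldType) (v : K -> option rat) (m : rat)
    (c : nat -> K) : R -> Prop :=
  fun x => exists u1 u2 : nat,
    in_New v m c u1 /\ in_New v m c u2 /\ Rle (INR u1) x /\ Rle x (INR u2).

(* coefficients of f(t) = sum_i a_i/(i+1) t^(i+1) *)
Definition antideriv_coef (K : fieldType) (a : nat -> K) (n : nat) : K :=
  match n with
  | 0%N => 0
  | i.+1 => a i / (i.+1)%:R
  end.

(* Since f_0 = 0 and f_u = a_(u-1)/u, we have v(f_u) >= -log_p u, with
   equality at u = i+1 when a_i is a unit.  As log_p u grows only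
   logarithmically, for every slope w >= m the value v(f_u) + w u is strictly
   smaller at u = i+1 than at every u outside a small window: for m = 1 and
   i = 0 the window is {1} (using p > 2), so the minimum is attained only once
   and New_1(f) is empty; for m = 1/2 and i <= 2 the window is [1,3], which
   needs 2 log_p u + 4 <= u for u >= 4 and hence p <> 2, 5 (it fails at
   u = p = 5).  Every generator of New_m(f) minimises v(f_u) + w u for some
   w >= m, so it lies in the window. *)

From Stdlib Require Import Reals.
From mathcomp Require Import all_boot all_order all_algebra.
From mathcomp Require Import zify lra.
Set Implicit Arguments. Unset Strict Implicit. Unset Printing Implicit Defensive.
Import Order.TTheory GRing.Theory Num.Theory.
Local Open Scope ring_scope.

Lemma double_add4_leq_expn3 k : (1 < k)%N -> (k.*2 + 4 <= 3 ^ k)%N.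
Proof.
elim: k => // [[|k]] IH _ //; rewrite expnS.
by case: k IH => [|k] IH //; move: (IH isT); lia.
Qed.

Lemma logn_gt1_double_add4_leq p u : (2 < p)%N -> (0 < u)%N -> (1 < logn p u)%N ->
  ((logn p u).*2 + 4 <= u)%N.
Proof.
move=> p_gt2 u_gt0; have := dvdn_leq u_gt0 (pfactor_dvdnn p u).
case: (logn p u) => [|[|k]] // pk_le_u _.
have := @double_add4_leq_expn3 k.+2 isT; have := leq_exp2r 3 p (isT : 0 < k.+2)%N.
lia.
Qed.

Lemma logn_add2_leq p u : (2 < p)%N -> (1 < u)%N -> (logn p u + 2 <= u)%N.
Proof.
move=> p_gt2 u_gt1; have u_gt0 : (0 < u)%N by lia.
have := dvdn_leq u_gt0 (pfactor_dvdnn p u).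
case logn_u: (logn p u) => [|[|k]]; rewrite ?expn1; try lia.
by have := logn_gt1_double_add4_leq p_gt2 u_gt0; rewrite logn_u; lia.
Qed.

Lemma logn_double_add4_leq p u : prime p -> p != 2 -> p != 5 -> (3 < u)%N ->
  ((logn p u).*2 + 4 <= u)%N.
Proof.
move=> p_pr p_neq2 p_neq5 u_gt3; have u_gt0 : (0 < u)%N by lia.
have p_gt2 : (2 < p)%N by rewrite ltn_neqAle eq_sym p_neq2 prime_gt1.
case logn_u: (logn p u) => [|[|k]]; [lia | | by rewrite -logn_u logn_gt1_double_add4_leq ?logn_u].
(* Here u is a multiple of p with u >= 4, so u >= 6 unless u = p >= 7. *)
have /dvdnP[q u_eq] : (p %| u)%N by rewrite -[p]expn1 -logn_u pfactor_dvdnn.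
have [p_ne4 p_ne6] : p != 4 /\ p != 6 by split; apply: contraTneq p_pr => ->.
case: q u_eq => [|[|q]] u_eq; lia.
Qed.

Lemma ole_trans : transitive ole.
Proof. by move=> [y|] [x|] [z|] //=; apply: le_trans. Qed.

Lemma ole_refl : reflexive ole.
Proof. by case=> //= x; apply: lexx. Qed.

Section PValuation.
Variables (K : fieldType) (p : nat) (v : K -> option rat).
Hypotheses (p_pr : prime p) (hv : p_valuation p v).

Lemma v_eq0 x : v x = None <-> x = 0. Proof. by case: hv. Qed.
Lemma vM x y : v (x * y) = oadd (v x) (v y). Proof. by case: hv. Qed.
Lemma v_p : v p%:R = Some 1. Proof. by case: hv. Qed.

Lemma v_add_ge t x y :
  ole (Some t) (v x) -> ole (Some t) (v y) -> ole (Some t) (v (x + y)).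
Proof. by case: hv => _ _ /(_ x y) /orP[] hxy _ hx hy; apply: ole_trans hxy. Qed.

Lemma v_mul_ge t x y :
  ole (Some 0) (v x) -> ole (Some t) (v y) -> ole (Some t) (v (x * y)).
Proof. by rewrite vM; case: (v x) (v y) => [?|] [?|] //= *; rewrite -[t]add0r lerD. Qed.

Lemma v1 : v 1 = Some 0.
Proof.
have := vM 1 1; rewrite mulr1.
case v1: (v 1) => [x|]; last by move/v_eq0: v1 => /eqP; rewrite oner_eq0.
by case=> x_eq; congr Some; lra.
Qed.

Lemma vN1 : v (-1) = Some 0.
Proof.
have := vM (-1) (-1); rewrite mulrNN mulr1 v1.
by case: (v (-1)) => //= x [x_eq]; congr Some; lra.
Qed.

Lemma v_natr_ge0 n : ole (Some 0) (v n%:R).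
Proof.
elim: n => [|n IH]; first by have /v_eq0 -> : (0%:R : K) = 0.
by rewrite -addn1 natrD; apply: v_add_ge => //; rewrite v1.
Qed.

Lemma v_natr_coprime m : coprime p m -> (0 < m)%N -> v m%:R = Some 0.
Proof.
move=> p_m m_gt0; have [u w bezout _] := egcdnP p m_gt0.
rewrite gcdnC (eqP p_m) in bezout.
have one_eq : (1 : K) = u%:R * m%:R + (-1) * (w%:R * p%:R).
  by rewrite mulN1r -!natrM bezout natrD addrC addKr.
(* If v(m) > 0, Bezout's identity 1 = u m - w p would force v(1) >= t > 0. *)
pose t := Num.min (odflt 1 (v m%:R)) 1.
have vm_ge : ole (Some t) (v m%:R) by rewrite /t; case: (v m%:R) => //= x; rewrite ge_min lexx.
have vp_ge : ole (Some t) (v p%:R) by rewrite v_p /= ge_min lexx orbT.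
have : ole (Some t) (v 1).
  rewrite one_eq; apply: v_add_ge; first exact: v_mul_ge (v_natr_ge0 _) vm_ge.
  by apply: v_mul_ge; [rewrite vN1 | apply: v_mul_ge (v_natr_ge0 _) vp_ge].
rewrite v1 /t /= ge_min ler10 orbF.
case: (v m%:R) (v_natr_ge0 m) => //= x x_ge0 x_le0.
by congr Some; apply/eqP; rewrite eq_le x_le0.
Qed.

Lemma v_exprp k : v (p%:R ^+ k) = Some k%:R.
Proof.
elim: k => [|k IH]; first by rewrite expr0 v1.
by rewrite exprS vM v_p IH /= -add1n natrD.
Qed.

Lemma v_natr n : (0 < n)%N -> v n%:R = Some (logn p n)%:R.
Proof.
move=> n_gt0; have [m p_m n_eq] := pfactor_coprime p_pr n_gt0.
have m_gt0 : (0 < m)%N by move: n_gt0; rewrite n_eq muln_gt0 => /andP[].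
by rewrite [in LHS]n_eq natrM natrX vM v_natr_coprime // v_exprp /= add0r.
Qed.

Lemma vV x : v x^-1 = omap -%R (v x).
Proof.
have [->|x_neq0] := eqVneq x 0; first by rewrite invr0; have /v_eq0 -> : (0 : K) = 0.
have := vM x x^-1; rewrite mulfV // v1.
by case: (v x) => [y|]; case: (v x^-1) => [z|] //= [yz]; congr Some; lra.
Qed.

End PValuation.

Section NewtonSet.
Variables (K : fieldType) (v : K -> option rat) (m : rat) (c : nat -> K).

Lemma in_New_mem (S : pred nat) r :
    (forall w u, m <= w -> ~~ S u ->
       ~~ ole (shift (v (c u)) w u) (shift (v (c r)) w r)) ->
  forall u, in_New v m c u -> S u.
Proof.
move=> r_beats u [w [m_le_w [_ u_min]]].
by apply/contraT => /(r_beats w u m_le_w); rewrite u_min.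
Qed.

Lemma in_New_unique_min r :
    (forall w u, m <= w -> u != r ->
       ~~ ole (shift (v (c u)) w u) (shift (v (c r)) w r)) ->
  forall u, ~ in_New v m c u.
Proof.
move=> r_beats u u_in; have /eqP u_eq := in_New_mem (S := pred1 r) r_beats u_in.
case: u_in => w [m_le_w [[u' [u'_neq shift_eq]] _]]; subst u.
have /negP[] := r_beats w u' m_le_w (introN eqP u'_neq).
by rewrite -shift_eq ole_refl.
Qed.

Lemma New_sub_interval lo hi :
    (forall u, in_New v m c u -> (lo <= u <= hi)%N) ->
  forall x, New v m c x -> Rle (INR lo) x /\ Rle x (INR hi).
Proof.
move=> in_New_bounded x [u1 [u2 [/in_New_bounded/andP[lo_u1 _] [/in_New_bounded/andP[_ u2_hi]]]]].
move=> [u1_x x_u2]; split.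
- by apply: Rle_trans u1_x; apply/le_INR/ssrnat.leP.
- by apply: Rle_trans x_u2 _; apply/le_INR/ssrnat.leP.
Qed.

End NewtonSet.

Section Antiderivative.
Variables (K : fieldType) (p : nat) (v : K -> option rat) (a : nat -> K).
Hypotheses (p_pr : prime p) (hv : p_valuation p v).
Hypothesis a_integral : forall i, ole (Some 0) (v (a i)).
Let f := antideriv_coef a.

Lemma v_antideriv_coef0 : v (f 0) = None.
Proof. exact/(v_eq0 hv). Qed.

Lemma v_antideriv_coef i : v (f i.+1) = oadd (v (a i)) (Some (- (logn p i.+1)%:R)).
Proof. by rewrite /f /= (vM hv) (vV hv) (v_natr p_pr hv). Qed.

Lemma antideriv_coef_beats (n i u : nat) (m w : rat) : v (a i) = Some 0 ->
    1 <= n%:R * m -> m <= w -> (i.+1 < u)%N ->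
    (n * logn p u + i.+1 < u + n * logn p i.+1)%N ->
  ~~ ole (shift (v (f u)) w u) (shift (v (f i.+1)) w i.+1).
Proof.
move=> a_i_unit nm_ge1 m_le_w; case: u => // u lt_iu.
rewrite /shift !v_antideriv_coef a_i_unit.
case: (v (a u)) (a_integral u) => //= x x_ge0.
rewrite -(ltr_nat rat) !natrD !natrM -ltNge => logn_lt.
have n_gt0 : 0 < (n%:R : rat).
  by rewrite lt0r ler0n andbT; apply: contraTneq nm_ge1 => ->; rewrite mul0r ler10.
move: lt_iu; rewrite -(ltr_nat rat) => lt_iu.
set k := (logn p u.+1)%:R in logn_lt *; set l := (logn p i.+1)%:R in logn_lt *.
set N := (n%:R : rat) in nm_ge1 logn_lt n_gt0 *.
have d_gt0 : 0 < u.+1%:R - i.+1%:R :> rat by rewrite subr_gt0.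
have : N * (k - l) < N * (w * (u.+1%:R - i.+1%:R)).
  have : N * m * (u.+1%:R - i.+1%:R) <= N * w * (u.+1%:R - i.+1%:R).
    by rewrite ler_pM2r // ler_pM2l.
  nra.
rewrite ltr_pM2l //; lra.
Qed.

Lemma in_New_antideriv_coef_empty : (2 < p)%N -> v (a 0) = Some 0 ->
  forall u, ~ in_New v 1 f u.
Proof.
move=> p_gt2 a0_unit; apply: (in_New_unique_min (r := 1)) => w [|u] w_ge1 u_neq1.
  by rewrite v_antideriv_coef0 v_antideriv_coef a0_unit.
apply: (antideriv_coef_beats (n := 1)) => //; first by rewrite mul1r.
  by case: u u_neq1.
have := @logn_add2_leq p u.+1 p_gt2; rewrite logn1; case: u u_neq1 => // u _; lia.
Qed.

Lemma in_New_antideriv_coef_window i m : p != 2 -> p != 5 -> (i <= 2)%N ->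
  v (a i) = Some 0 -> 1 / 2 <= m -> forall u, in_New v m f u -> (1 <= u <= 3)%N.
Proof.
move=> p_neq2 p_neq5 i_le2 ai_unit m_ge; apply: (in_New_mem (r := i.+1)) => w [|u] m_le_w u_out.
  by rewrite v_antideriv_coef0 v_antideriv_coef ai_unit.
have u_gt3 : (3 < u.+1)%N by rewrite ltnNge.
apply: (antideriv_coef_beats (n := 2)) => //; first by lra.
  by lia.
by have := logn_double_add4_leq p_pr p_neq2 p_neq5 u_gt3; lia.
Qed.

End Antiderivative.

Theorem lemma6p2 (K : closedFieldType) (p : nat) (v : K -> option rat)
  (hp : prime p) (hp2 : p <> 2%N) (hp5 : p <> 5%N)
  (hv : p_valuation p v)
  (a : nat -> K) (ha : forall i, ole (Some 0%R) (v (a i))) :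
  let f := antideriv_coef a in
  (v (a 0%N) = Some 0%R ->
     (forall x : R, ~ New v 1%R f x) /\
     (forall x : R, New v (1 / 2)%R f x -> Rle (INR 1) x /\ Rle x (INR 3))) /\
  (v (a 1%N) = Some 0%R \/ v (a 2%N) = Some 0%R ->
     (forall x : R, New v 1%R f x -> Rle (INR 1) x /\ Rle x (INR 3)) /\
     (forall x : R, New v (1 / 2)%R f x -> Rle (INR 1) x /\ Rle x (INR 3))).
Proof.
move=> f; move/eqP: hp2 => p_neq2; move/eqP: hp5 => p_neq5.
have p_gt2 : (2 < p)%N by rewrite ltn_neqAle eq_sym p_neq2 prime_gt1.
have New_in_1_3 i m : (i <= 2)%N -> v (a i) = Some 0 -> 1 / 2 <= m ->
    forall x, New v m f x -> Rle (INR 1) x /\ Rle x (INR 3).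
  move=> i_le2 ai_unit m_ge; apply: New_sub_interval.
  exact: in_New_antideriv_coef_window p_neq2 p_neq5 i_le2 ai_unit m_ge.
split=> [a0_unit | a12_unit]; last first.
  have [i [i_le2 ai_unit]] : exists i, (i <= 2)%N /\ v (a i) = Some 0.
    by case: a12_unit; [exists 1%N | exists 2%N].
  by split; apply: New_in_1_3 i_le2 ai_unit _; lra.
split; last exact: New_in_1_3 (leq0n 2) a0_unit (lexx _).
move=> x [u1 [_ [u1_in _]]].
exact: (in_New_antideriv_coef_empty hp hv ha p_gt2 a0_unit u1_in).
Qed.
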